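(* Let $1\le k\le n$. For any matrices $\mathcal{A}\in\Gamma_k$ and $\mathcal{B}\in\Gamma_k^*$ (in $\mathbb{S}^n$), $$\rho_k(\mathcal{A})\,\rho_k^*(\mathcal{B})\le \frac1n\,\mathcal{A}\cdot\mathcal{B},$$ where $\mathcal{A}\cdot\mathcal{B}=\sum_{i,j}a_{ij}b_{ij}=\operatorname{tr}(\mathcal{A}\mathcal{B})$.
   Context: $\mathbb{S}^n$ is the space of real symmetric $n\times n$ matrices. For $\lambda\in\mathbb{R}^n$, $\mathcal{S}_k(\lambda)=\sum_{i_1<\dots<i_k}\lambda_{i_1}\cdots\lambda_{i_k}$. $\Gamma_k=\{\lambda\in\mathbb{R}^n:\mathcal{S}_j(\lambda)>0,\ j=1,\dots,k\}$ and $\Gamma_k^*=\{\lambda\in\mathbb{R}^n:\lambda\cdot\mu\ge0\ \forall\mu\in\Gamma_k\}$. On $\Gamma_k$, $\rho_k(\lambda)=\big(\mathcal{S}_k(\lambda)/\binom nk\big)^{1/k}$; on $\Gamma_k^*$, $\rho_k^*(\lambda)=\inf\{\lambda\cdot\mu/n:\mu\in\Gamma_k,\ \rho_k(\mu)\ge1\}$. A matrix belongs to $\Gamma_k$ (resp. $\Gamma_k^*$) if its vector of eigenvalues does, and $\rho_k(\mathcal{A})$, $\rho_k^*(\mathcal{B})$ are evaluated at the eigenvalue vectors. *)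

From HB Require Import structures.
From mathcomp Require Import all_boot all_order all_algebra.
From mathcomp Require Import boolp classical_sets reals exp.
Set Implicit Arguments. Unset Strict Implicit. Unset Printing Implicit Defensive.
Import Order.TTheory GRing.Theory Num.Theory.
Local Open Scope ring_scope.
Local Open Scope classical_set_scope.

Section Defs.
Variables (R : realType) (n : nat).

Definition esym_k (k : nat) (l : 'I_n -> R) : R :=
  \sum_(I : {set 'I_n} | #|I| == k) \prod_(i in I) l i.

Definition Gamma (k : nat) (l : 'I_n -> R) : Prop :=
  forall j : nat, (1 <= j <= k)%N -> 0 < esym_k j l.

Definition dotv (l m : 'I_n -> R) : R := \sum_i l i * m i.

Definition Gamma_dual (k : nat) (l : 'I_n -> R) : Prop :=
  forall m, Gamma k m -> 0 <= dotv l m.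

Definition rho (k : nat) (l : 'I_n -> R) : R :=
  powR (esym_k k l / ('C(n, k))%:R) (k%:R^-1).

Definition rho_dual (k : nat) (l : 'I_n -> R) : R :=
  inf [set dotv l m / n%:R | m in [set m | Gamma k m /\ 1 <= rho k m]].

(* l is a vector of eigenvalues (with multiplicity) of A *)
Definition eigvec_of (A : 'M[R]_n) (l : 'I_n -> R) : Prop :=
  char_poly A = \prod_(i < n) ('X - (l i)%:P).

Definition sym_mx (A : 'M[R]_n) : Prop := A^T = A.

Definition frob (A B : 'M[R]_n) : R := \sum_i \sum_j A i j * B i j.

End Defs.

From HB Require Import structures.
From mathcomp Require Import all_boot all_order all_algebra.
From mathcomp Require Import boolp classical_sets reals exp.
From mathcomp Require Import perm complex.
From mathcomp Require Import ring lra.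
Import Order.TTheory GRing.Theory Num.Theory.
Local Open Scope complex_scope.
Local Open Scope sesquilinear_scope.
Local Open Scope ring_scope.
Set Implicit Arguments. Unset Strict Implicit. Unset Printing Implicit Defensive.

(* Diagonalize A = U^* diag(lA) U and B = V^* diag(lB) V with unitary U, V over
   R[i].  Then A . B = sum_{k,l} lA_k lB_l |W_kl|^2 with W = U V^*, and the
   matrix (|W_kl|^2) is bistochastic.  A linear function of a bistochastic
   matrix dominates its value at some permutation matrix: pair the largest
   lA_k with the smallest lB_l, eliminate that row and column, and induct.
   Hence A . B >= sum_j lA_(s j) lB_j for a permutation s.  Finally
   (lA o s) / rho_k(lA) lies in Gamma_k with rho_k = 1, so it is admissible in
   the infimum defining rho_k^*(lB). *)

Lemma big_setT (R : Type) (idx : R) (op : R -> R -> R) (T : finType) (F : T -> R) :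
  \big[op/idx]_(i in [set: T]) F i = \big[op/idx]_i F i.
Proof. by apply: eq_bigl => i; rewrite inE. Qed.

Section Bistochastic.
Variables (R : realFieldType) (T : finType).
Implicit Types (I J : {set T}) (P : T -> T -> R).

Definition bistochastic I J P :=
  [/\ {in I & J, forall i j, 0 <= P i j},
      {in I, forall i, \sum_(j in J) P i j = 1} &
      {in J, forall j, \sum_(i in I) P i j = 1}].

Lemma bistochasticT I J P :
  bistochastic I J P -> bistochastic J I (fun j i => P i j).
Proof. by case=> P_ge0 rowP colP; split=> // j i jJ iI; apply: P_ge0. Qed.

Lemma bistochastic_row_setD1 I J P i0 j0 : bistochastic I J P ->
  i0 \in I -> j0 \in J -> \sum_(j in J :\ j0) P i0 j = 1 - P i0 j0.
Proof.
case=> _ rowP _ i0I j0J.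
by rewrite -(rowP i0 i0I) [in RHS](big_setD1 j0) //= addrAC subrr add0r.
Qed.

Lemma bistochastic_row_setD1_eq0 I J P i0 j0 : bistochastic I J P ->
  i0 \in I -> j0 \in J -> P i0 j0 = 1 -> {in J :\ j0, forall j, P i0 j = 0}.
Proof.
move=> PJ i0I j0J P1; have [P_ge0 _ _] := PJ.
apply: psumr_eq0P => [j /setD1P[_ /(P_ge0 _ _ i0I)] //|].
by rewrite (bistochastic_row_setD1 PJ) // P1 subrr.
Qed.

(* Row i0 and column j0 are deleted and their remaining mass is redistributed
   proportionally.  When P i0 j0 = 1 the division by 0 yields 0, which is
   harmless: the rest of row i0 and of column j0 then vanishes. *)
Definition contract P i0 j0 i j := P i j + P i j0 * P i0 j / (1 - P i0 j0).

Lemma contract_row_sum I J P i0 j0 : bistochastic I J P -> i0 \in I -> j0 \in J ->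
  {in I :\ i0, forall i, \sum_(j in J :\ j0) contract P i0 j0 i j = 1}.
Proof.
move=> PJ i0I j0J i iI'; have iI : i \in I by move: iI'; rewrite in_setD1 => /andP[].
rewrite big_split /= -mulr_suml -mulr_sumr !(bistochastic_row_setD1 PJ) //.
have [s0|s_neq0] := eqVneq (1 - P i0 j0) 0; last by rewrite mulfK // subrK.
have P1 : P i0 j0 = 1 by apply/eqP; rewrite eq_sym -subr_eq0 s0.
rewrite (bistochastic_row_setD1_eq0 (bistochasticT PJ) j0J i0I P1 iI').
by rewrite !mul0r subr0 addr0.
Qed.

Lemma bistochastic_contract I J P i0 j0 : bistochastic I J P -> i0 \in I -> j0 \in J ->
  bistochastic (I :\ i0) (J :\ j0) (contract P i0 j0).
Proof.
move=> PJ i0I j0J; have [P_ge0 _ _] := PJ.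
have s_ge0 : 0 <= 1 - P i0 j0.
  by rewrite -(bistochastic_row_setD1 PJ) // sumr_ge0 // => j /setD1P[_ /(P_ge0 _ _ i0I)].
split; first move=> i j /setD1P[_ iI] /setD1P[_ jJ].
- by rewrite addr_ge0 ?divr_ge0 ?mulr_ge0 ?P_ge0.
- exact: contract_row_sum.
- move=> j jJ'; rewrite -(contract_row_sum (bistochasticT PJ) j0J i0I jJ').
  by apply: eq_bigr => i _; rewrite /contract /= [P i0 j * _]mulrC.
Qed.

Variables mu b : T -> R.

Definition cost I J P := \sum_(i in I) \sum_(j in J) mu i * b j * P i j.

Lemma cost_setD1 I J P i0 j0 : i0 \in I -> j0 \in J ->
  cost I J P = mu i0 * b j0 * P i0 j0 + mu i0 * \sum_(j in J :\ j0) b j * P i0 j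
               + b j0 * \sum_(i in I :\ i0) mu i * P i j0 + cost (I :\ i0) (J :\ j0) P.
Proof.
move=> i0I j0J; rewrite /cost (big_setD1 i0) //= [X in X + _](big_setD1 j0) //=.
under [X in _ + X]eq_bigr do rewrite (big_setD1 j0) //=.
rewrite big_split /= !mulr_sumr [LHS]addrA.
by congr (_ + _ + _ + _); apply: eq_bigr => i _; ring.
Qed.

Lemma cost_contractE I J P i0 j0 :
  cost I J (contract P i0 j0) = cost I J P +
    (\sum_(i in I) mu i * P i j0) * (\sum_(j in J) b j * P i0 j) / (1 - P i0 j0).
Proof.
rewrite /cost !mulr_suml -big_split; apply: eq_bigr => i _.
rewrite mulr_sumr mulr_suml -big_split; apply: eq_bigr => j _.
by rewrite /contract /=; ring.
Qed.

Lemma cost_contract I J P i0 j0 : bistochastic I J P -> i0 \in I -> j0 \in J ->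
  {in I, forall i, mu i <= mu i0} -> {in J, forall j, b j0 <= b j} ->
  mu i0 * b j0 + cost (I :\ i0) (J :\ j0) (contract P i0 j0) <= cost I J P.
Proof.
move=> PJ i0I j0J mu_max b_min; have [P_ge0 _ _] := PJ.
rewrite cost_contractE (@cost_setD1 I J P i0 j0) //.
set s := 1 - P i0 j0; have -> : P i0 j0 = 1 - s by rewrite /s; lra.
set X := \sum_(i in I :\ i0) _; set Y := \sum_(j in J :\ j0) _.
have col_rest : \sum_(i in I :\ i0) P i j0 = s :=
  bistochastic_row_setD1 (bistochasticT PJ) j0J i0I.
have row_rest : \sum_(j in J :\ j0) P i0 j = s := bistochastic_row_setD1 PJ i0I j0J.
have X_le : X <= s * mu i0.
  rewrite -col_rest mulr_suml; apply: ler_sum => i /setD1P[_ iI].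
  by rewrite mulrC; apply: ler_wpM2l; [apply: P_ge0 | apply: mu_max].
have Y_ge : s * b j0 <= Y.
  rewrite -row_rest mulr_suml; apply: ler_sum => j /setD1P[_ jJ].
  by rewrite [b j * _]mulrC; apply: ler_wpM2l; [apply: P_ge0 | apply: b_min].
have : 0 <= s by rewrite -row_rest sumr_ge0 // => j /setD1P[_ /(P_ge0 _ _ i0I)].
rewrite le_eqVlt => /orP[/eqP s0 | s_gt0].
  have P1 : P i0 j0 = 1 by move: s0; rewrite /s; lra.
  have -> : X = 0 by apply: big1 => i
    /(bistochastic_row_setD1_eq0 (bistochasticT PJ) j0J i0I P1) ->; rewrite mulr0.
  have -> : Y = 0 by apply: big1 => j /(bistochastic_row_setD1_eq0 PJ i0I j0J P1) ->; rewrite mulr0.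
  by rewrite -s0 mul0r subr0; lra.
(* Multiplied by s, the goal says exactly that this product is nonnegative. *)
have cross : 0 <= (s * mu i0 - X) * (Y - s * b j0) by rewrite mulr_ge0 // subr_ge0.
have XYs : s * (X * Y / s) = X * Y by rewrite mulrC divfK ?gt_eqF.
by rewrite -(ler_pM2l s_gt0) !mulrDr XYs; nra.
Qed.

Lemma bistochastic_cost_ge_injection m I J P : #|I| = m -> #|J| = m -> bistochastic I J P ->
  exists f : T -> T, [/\ {in J &, injective f}, {in J, forall j, f j \in I} &
    \sum_(j in J) mu (f j) * b j <= cost I J P].
Proof.
elim: m I J P => [|m IHm] I J P cardI cardJ PJ.
  move/cards0_eq: cardI => ->; move/cards0_eq: cardJ => ->.
  by exists id; split=> [j1 j2|j|]; rewrite ?inE // /cost !big_set0.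
have [i0 i0I mu_max] : exists2 i0, i0 \in I & {in I, forall i, mu i <= mu i0}.
  have /card_gt0P[i iI] : (0 < #|I|)%N by rewrite cardI.
  by case: (arg_maxP mu iI) => i0 i0I max_i0; exists i0.
have [j0 j0J b_min] : exists2 j0, j0 \in J & {in J, forall j, b j0 <= b j}.
  have /card_gt0P[j jJ] : (0 < #|J|)%N by rewrite cardJ.
  by case: (arg_minP b jJ) => j0 j0J min_j0; exists j0.
have cardD1 (A : {set T}) x : x \in A -> #|A| = m.+1 -> #|A :\ x| = m.
  by move=> xA; rewrite (cardsD1 x) xA add1n => -[].
have [f [f_inj f_in f_le]] :=
  IHm _ _ _ (cardD1 _ _ i0I cardI) (cardD1 _ _ j0J cardJ) (bistochastic_contract PJ i0I j0J).
have f_neq : {in J :\ j0, forall j, f j != i0} by move=> j /f_in /setD1P[].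
have inJ' j : j \in J -> j != j0 -> j \in J :\ j0 by move=> jJ j_neq; apply/setD1P.
exists (fun j => if j == j0 then i0 else f j); split.
- move=> j1 j2 j1J j2J /=.
  case: eqVneq => [->|j1_neq]; case: eqVneq => [->|j2_neq] //.
  + by move=> i0E; move: (f_neq j2 (inJ' _ j2J j2_neq)); rewrite -i0E eqxx.
  + by move=> i0E; move: (f_neq j1 (inJ' _ j1J j1_neq)); rewrite i0E eqxx.
  + by apply: f_inj; apply: inJ'.
- move=> j jJ /=; case: eqVneq => [//|j_neq].
  by have /setD1P[] := f_in j (inJ' _ jJ j_neq).
rewrite (big_setD1 j0) //= eqxx.
under eq_bigr => j /setD1P[j_neq _] do rewrite ifN //.
by apply: le_trans (cost_contract PJ i0I j0J mu_max b_min); rewrite lerD2l.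
Qed.

Lemma bistochastic_cost_ge_perm P : bistochastic [set: T] [set: T] P ->
  exists s : {perm T}, \sum_j mu (s j) * b j <= cost [set: T] [set: T] P.
Proof.
move=> PT; have [f [f_inj _ f_le]] := bistochastic_cost_ge_injection (erefl _) (erefl _) PT.
have f_inj' : injective f by move=> j1 j2; apply: f_inj; rewrite inE.
by exists (perm f_inj'); under eq_bigr do rewrite permE; rewrite -big_setT.
Qed.

End Bistochastic.

Section Rho.
Variables (R : realType) (n k : nat).
Hypotheses (k_gt0 : (0 < k)%N) (k_le_n : (k <= n)%N).
Implicit Types (a b l : 'I_n -> R).

Lemma esym_k_perm j l (g : 'I_n -> 'I_n) : injective g -> esym_k j (l \o g) = esym_k j l.
Proof.
move=> g_inj; rewrite /esym_k [RHS](reindex_inj (imset_inj g_inj)) /=.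
apply: eq_big => [I|I _]; first by rewrite card_imset.
by rewrite big_imset //; move=> i1 i2 _ _ /g_inj.
Qed.

Lemma esym_kZ j l c : esym_k j (fun i => c * l i) = c ^+ j * esym_k j l.
Proof.
rewrite /esym_k mulr_sumr; apply: eq_bigr => I /eqP <-.
by rewrite big_split /= prodr_const.
Qed.

Lemma Gamma_perm l (g : 'I_n -> 'I_n) : injective g -> Gamma k l -> Gamma k (l \o g).
Proof. by move=> g_inj Gl j j_le; rewrite esym_k_perm //; apply: Gl. Qed.

Lemma rho_perm l (g : 'I_n -> 'I_n) : injective g -> rho k (l \o g) = rho k l.
Proof. by move=> g_inj; rewrite /rho esym_k_perm. Qed.

Lemma esym_k_gt0 l : Gamma k l -> 0 < esym_k k l.
Proof. by apply; rewrite k_gt0 leqnn. Qed.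

Lemma rho_gt0 l : Gamma k l -> 0 < rho k l.
Proof.
by move=> Gl; rewrite /rho powR_gt0 // divr_gt0 ?esym_k_gt0 // ltr0n bin_gt0.
Qed.

Lemma rhoZ l c : 0 <= c -> Gamma k l -> rho k (fun i => c * l i) = c * rho k l.
Proof.
move=> c_ge0 Gl; have e_ge0 : 0 <= esym_k k l / 'C(n, k)%:R.
  by rewrite divr_ge0 // ltW // esym_k_gt0.
rewrite /rho esym_kZ -mulrA powRM ?exprn_ge0 //.
by rewrite -powR_mulrn // -powRrM mulfV ?powRr1 // pnatr_eq0 -lt0n.
Qed.

Lemma rho_dual_le_dotv b mu : Gamma_dual k b -> Gamma k mu -> 1 <= rho k mu ->
  rho_dual k b <= dotv b mu / n%:R.
Proof.
move=> Gb Gmu rho_mu; apply: ge_inf; last by exists mu.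
by exists 0 => _ [m [Gm _] <-]; rewrite divr_ge0 ?Gb.
Qed.

Lemma rho_rho_dual_le_dotv a b : Gamma k a -> Gamma_dual k b ->
  rho k a * rho_dual k b <= n%:R^-1 * dotv a b.
Proof.
move=> Ga Gb; have r_gt0 := rho_gt0 Ga.
pose mu i := (rho k a)^-1 * a i.
have Gmu : Gamma k mu.
  by move=> j j_le; rewrite esym_kZ mulr_gt0 ?exprn_gt0 ?invr_gt0 ?Ga.
have rho_mu : rho k mu = 1 by rewrite rhoZ ?invr_ge0 ?ltW ?mulVf ?gt_eqF.
have dual_le : rho_dual k b <= dotv b mu / n%:R by apply: rho_dual_le_dotv; rewrite ?rho_mu.
have dotv_mu : dotv b mu = (rho k a)^-1 * dotv a b.
  by rewrite /dotv mulr_sumr; apply: eq_bigr => i _; rewrite /mu mulrCA [b i * _]mulrC.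
apply: le_trans (ler_wpM2l (ltW r_gt0) dual_le) _.
by rewrite dotv_mu !mulrA mulfV ?gt_eqF // mul1r mulrC.
Qed.

Lemma rho_rho_dual_le_perm a b (g h : 'S_n) : Gamma k a -> Gamma_dual k b ->
  rho k a * rho_dual k b <= n%:R^-1 * \sum_i a (g i) * b (h i).
Proof.
move=> Ga Gb; rewrite (reindex_inj (@perm_inj _ h^-1)) /=.
under eq_bigr do rewrite permKV -permM.
rewrite -(rho_perm a (@perm_inj _ (h^-1 * g))).
by apply: rho_rho_dual_le_dotv => //; apply: Gamma_perm => //; apply: perm_inj.
Qed.

End Rho.

Section UnitaryConjugation.
Variables (C : numClosedFieldType) (n : nat).
Implicit Types (U V W : 'M[C]_n) (x y : 'rV[C]_n).

Lemma unitarymx_row_norm W k : W \is unitarymx -> \sum_l `|W k l| ^+ 2 = 1.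
Proof.
move=> /unitarymxP /matrixP /(_ k k); rewrite !mxE eqxx /= mulr1n => <-.
by apply: eq_bigr => l _; rewrite !mxE normCK.
Qed.

Lemma unitarymx_col_norm W l : W \is unitarymx -> \sum_k `|W k l| ^+ 2 = 1.
Proof.
rewrite -trmxC_unitary => /(unitarymx_row_norm l) <-.
by apply: eq_bigr => k _; rewrite !mxE norm_conjC.
Qed.

Lemma mxtrace_unitary_diag U V x y :
  \tr ((U^t* *m diag_mx x *m U) *m (V^t* *m diag_mx y *m V)) =
  \sum_k \sum_l x 0 k * y 0 l * `|(U *m V^t*) k l| ^+ 2.
Proof.
set W := U *m V^t*.
have WtE : W^t* = V *m U^t* by rewrite trmx_mul map_mxM trmxCK.
rewrite -!mulmxA mxtrace_mulC.
have -> : diag_mx x *m (U *m (V^t* *m (diag_mx y *m V))) *m U^t* =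
          diag_mx x *m W *m diag_mx y *m W^t* by rewrite WtE !mulmxA.
rewrite mul_diag_mx mul_mx_diag /mxtrace; apply: eq_bigr => k _.
rewrite mxE; apply: eq_bigr => l _.
by rewrite !mxE normCK; ring.
Qed.

End UnitaryConjugation.

Lemma prod_XsubC_perm (F : fieldType) n (d l : 'I_n -> F) :
  \prod_(i < n) ('X - (d i)%:P) = \prod_(i < n) ('X - (l i)%:P) ->
  exists p : 'S_n, forall i, d i = l (p i).
Proof.
move=> dl; have : perm_eq [tuple d i | i < n] [tuple l i | i < n].
  by apply: prod_XsubC_eq; rewrite /= !big_map -!enumT !big_enum.
case/tuple_permP => p /val_inj dlp; exists p => i.
by have := congr1 (fun t => tnth t i) dlp; rewrite !tnth_mktuple.
Qed.

Lemma char_poly_similar (F : fieldType) n (P D : 'M[F]_n) : P \in unitmx ->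
  char_poly (invmx P *m D *m P) = char_poly D.
Proof.
move=> P_unit; rewrite /char_poly /char_poly_mx.
set Q := map_mx polyC (invmx P); set P' := map_mx polyC P.
have QP : Q *m P' = 1%:M by rewrite -map_mxM mulVmx // map_mx1.
have -> : 'X%:M - map_mx polyC (invmx P *m D *m P) = Q *m ('X%:M - map_mx polyC D) *m P'.
  rewrite !map_mxM mulmxBr mulmxBl -/Q -/P'; congr (_ - _).
  by rewrite scalar_mxC -mulmxA QP mulmx1.
by rewrite !det_mulmx mulrAC -det_mulmx QP det1 mul1r.
Qed.

Section RealSymmetric.
Variables (R : realType) (n : nat).
Local Notation toC := (real_complex R).

Lemma sym_spectral (A : 'M[R]_n) (l : 'I_n -> R) : sym_mx A -> eigvec_of A l ->
  exists U (p : 'S_n), U \is unitarymx /\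
    map_mx toC A = U^t* *m diag_mx (\row_i (l (p i))%:C) *m U.
Proof.
move=> A_sym A_eig; set Ac := map_mx toC A.
have Ac_herm : Ac^t* = Ac.
  by apply/matrixP => i j; rewrite !mxE -{1}A_sym mxE; exact: conjc_real.
have /orthomx_spectralP Ac_diag : Ac \is normalmx by apply/normalmxP; rewrite Ac_herm.
set U := spectralmx Ac in Ac_diag; set d := spectral_diag Ac in Ac_diag.
have U_unitary : U \is unitarymx by apply: spectral_unitarymx.
have : \prod_(i < n) ('X - (d 0 i)%:P) = \prod_(i < n) ('X - (toC (l i))%:P).
  have <- : char_poly Ac = \prod_(i < n) ('X - (d 0 i)%:P).
    rewrite {1}Ac_diag char_poly_similar ?unitarymx_unit // char_poly_trig ?diag_mx_is_trig //.
    by apply: eq_bigr => i _; rewrite mxE eqxx mulr1n.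
  rewrite -map_char_poly A_eig rmorph_prod; apply: eq_bigr => i _.
  exact: map_polyXsubC.
case/prod_XsubC_perm => p dE; exists U, p; split=> //.
rewrite {1}Ac_diag invmx_unitary //; congr (_ *m diag_mx _ *m _).
by apply/rowP => i; rewrite mxE dE.
Qed.

Lemma frobE (A B : 'M[R]_n) : frob A B = \tr (A *m B^T).
Proof.
by apply: eq_bigr => i _; rewrite mxE; apply: eq_bigr => j _; rewrite mxE.
Qed.

Lemma frob_bistochastic (A B : 'M[R]_n) (U V : 'M[R[i]]_n) (x y : 'I_n -> R) :
  sym_mx B -> U \is unitarymx -> V \is unitarymx ->
  map_mx toC A = U^t* *m diag_mx (\row_i (x i)%:C) *m U ->
  map_mx toC B = V^t* *m diag_mx (\row_i (y i)%:C) *m V ->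
  exists2 P, bistochastic [set: 'I_n] [set: 'I_n] P &
             frob A B = cost x y [set: 'I_n] [set: 'I_n] P.
Proof.
move=> B_sym U_unitary V_unitary A_diag B_diag; set W := U *m V^t*.
have W_unitary : W \is unitarymx by rewrite mul_unitarymx ?trmxC_unitary.
pose P k l := complex.Re (W k l) ^+ 2 + complex.Im (W k l) ^+ 2.
have PE k l : (P k l)%:C = `|W k l| ^+ 2 := add_Re2_Im2 _.
exists P; first split.
- by move=> k l _ _; rewrite addr_ge0 ?sqr_ge0.
- move=> k _; apply: complexI; rewrite rmorph_sum rmorph1 big_setT.
  by rewrite -(unitarymx_row_norm k W_unitary); apply: eq_bigr => l _; apply: PE.
- move=> l _; apply: complexI; rewrite rmorph_sum rmorph1 big_setT.
  by rewrite -(unitarymx_col_norm l W_unitary); apply: eq_bigr => k _; apply: PE.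
apply: complexI; rewrite frobE [B^T]B_sym -trace_map_mx map_mxM A_diag B_diag.
rewrite mxtrace_unitary_diag /cost big_setT rmorph_sum; apply: eq_bigr => k _.
rewrite big_setT rmorph_sum; apply: eq_bigr => l _.
by rewrite -PE !rmorphM !mxE.
Qed.

End RealSymmetric.

Theorem proposition2p1 (R : realType) (n k : nat) (hk1 : (1 <= k)%N) (hkn : (k <= n)%N)
  (A B : 'M[R]_n) (lA lB : 'I_n -> R) :
  sym_mx A -> sym_mx B ->
  eigvec_of A lA -> eigvec_of B lB ->
  Gamma k lA -> Gamma_dual k lB ->
  rho k lA * rho_dual k lB <= (n%:R)^-1 * frob A B.
Proof.
move=> A_sym B_sym A_eig B_eig GA GB.
have [U [p [U_unitary A_diag]]] := sym_spectral A_sym A_eig.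
have [V [q [V_unitary B_diag]]] := sym_spectral B_sym B_eig.
have [P P_bist ->] := frob_bistochastic B_sym U_unitary V_unitary A_diag B_diag.
have [s cost_ge] := bistochastic_cost_ge_perm (lA \o p) (lB \o q) P_bist.
apply: le_trans (ler_wpM2l _ cost_ge); last by rewrite invr_ge0.
under eq_bigr do rewrite /= -permM.
exact: rho_rho_dual_le_perm.
Qed.
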